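(* Let $k\ge 2$ and $n>2k$ be integers, $X=\{1,\dots,n\}$, $x\in X$, $\mathcal S_x=\left\{S\in\binom{X}{k}\colon x\in S\right\}$ and $\mathcal A=\left\{A\in\binom{X}{k}\colon |A\cap\{1,2,3\}|\ge 2\right\}$. Then $$|\mathcal I(\mathcal S_x)|<\tfrac23\,|\mathcal I(\mathcal A)|.$$
   Context: $\binom{X}{k}$ denotes the family of all $k$-element subsets of $X$. For a family $\mathcal F$, $\mathcal I(\mathcal F):=\{F\cap F'\colon F,F'\in\mathcal F,\ F\neq F'\}$. *)

From mathcomp Require Import all_boot.
Set Implicit Arguments. Unset Strict Implicit. Unset Printing Implicit Defensive.

Definition ksets (T : finType) (k : nat) : {set {set T}} :=
  [set S : {set T} | #|S| == k].

Definition interfam (T : finType) (F : {set {set T}}) : {set {set T}} :=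
  [set A :&: B | A in F, B in F & A != B].

(* Ground set X = {1..n} is modelled by 'I_n = {0..n-1}; element i+1 <-> i. *)

Definition star (n k : nat) (x : 'I_n) : {set {set 'I_n}} :=
  [set S in ksets 'I_n k | x \in S].

(* {1,2,3} corresponds to {0,1,2} in 'I_n *)
Definition first3 (n : nat) : {set 'I_n} := [set i : 'I_n | (i < 3)%N].

Definition famA (n k : nat) : {set {set 'I_n}} :=
  [set A in ksets 'I_n k | (2 <= #|A :&: first3 n|)%N].

From mathcomp Require Import all_boot zify perm.
Set Implicit Arguments. Unset Strict Implicit. Unset Printing Implicit Defensive.

(* Let smallfam k Q be the family of sets S with |S| < k having
   the property Q.  Two distinct k-sets meet in fewer than k points, so
   I(S_x) is contained in smallfam k (x \in S).  Relabelling the points by a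
   transposition shows that this family is not larger than
   smallfam k (0 \in S), whose size is p + q with
       p = |smallfam k (0 \in S, 1 \in S)|,  q = |smallfam k (0 \in S, 1 \notin S)|.
   Swapping 0 and 1 gives q <= g := |smallfam k (1 \in S, 0 \notin S)|, and
   deleting the point 1 injects the p-family into the q-family but misses
   every set of size k - 1, whence p < q.  On the other side, when n > 2k
   every S with |S| < k meeting {0,1,2} is the intersection of two distinct
   members of A: enlarge S by two disjoint blocks outside S which restore
   two points of {0,1,2}.  Hence |I(A)| >= p + q + g, and
       3 |I(S_x)| <= 3 (p + q) < 2 (p + q + g) <= 2 |I(A)|. *)

Section FiniteSets.
Variable T : finType.
Implicit Types (a b : T) (A B D P Z S : {set T}) (F : {set {set T}}).

Lemma cardsU_disjoint A B : [disjoint A & B] -> #|A :|: B| = #|A| + #|B|.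
Proof. by move=> dAB; rewrite cardsU disjoint_setI0 // cards0 subn0. Qed.

Lemma extend_subset P Z m : P \subset Z -> #|P| <= m <= #|Z| ->
  exists D, [/\ P \subset D, D \subset Z & #|D| = m].
Proof.
move=> sPZ; elim: m => [|m IH] /andP[lePm lemZ].
  by exists P; split=> //; apply/eqP; rewrite -leqn0.
have [ltPm | ePm] := ltnP #|P| m.+1; last first.
  by exists P; split=> //; apply/eqP; rewrite eqn_leq lePm ePm.
have [D [sPD sDZ cD]] := IH ltac:(by rewrite -ltnS ltPm ltnW).
have : D \proper Z by rewrite properEcard sDZ cD.
case/properP=> _ [y yZ yD].
exists (y |: D); split; rewrite ?cardsU1 ?yD ?cD //.
  exact: subset_trans sPD (subsetUr _ _).
by rewrite subUset sub1set yZ.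
Qed.

Lemma disjoint_extensions Z P1 P2 m :
  P1 \subset Z -> P2 \subset Z -> [disjoint P1 & P2] ->
  #|P1| <= m -> #|P2| <= m -> 2 * m <= #|Z| ->
  exists D1 D2, [/\ P1 \subset D1, P2 \subset D2, D1 \subset Z, D2 \subset Z
                  & [/\ [disjoint D1 & D2], #|D1| = m & #|D2| = m]].
Proof.
move=> sP1 sP2 dP c1 c2 cZ.
have [D1 [sPD1 sD1 cD1]] : exists D1,
    [/\ P1 \subset D1, D1 \subset Z :\: P2 & #|D1| = m].
  apply: extend_subset; first by rewrite subsetD sP1.
  by rewrite c1 cardsDS //; lia.
have [D2 [sPD2 sD2 cD2]] : exists D2,
    [/\ P2 \subset D2, D2 \subset Z :\: D1 & #|D2| = m].
  apply: extend_subset.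
    rewrite subsetD sP2 disjoint_sym.
    by case/subsetDP: sD1.
  rewrite c2 cardsDS; first by lia.
  by apply: subset_trans sD1 (subsetDl _ _).
exists D1, D2; split; [done | done | | | split=> //].
- by apply: subset_trans sD1 (subsetDl _ _).
- by apply: subset_trans sD2 (subsetDl _ _).
- by rewrite disjoint_sym; case/subsetDP: sD2.
Qed.

Lemma meet_in_interfam F A B : A \in F -> B \in F ->
  #|A :&: B| < #|A| -> A :&: B \in interfam F.
Proof.
move=> AF BF ltAB; apply/imset2P; exists A B => //.
rewrite inE BF; apply: contraTneq ltAB => ->.
by rewrite setIid ltnn.
Qed.

Lemma card_meet_lt A B k : #|A| = k -> #|B| = k -> A != B -> #|A :&: B| < k.
Proof.
move=> cA cB; apply: contraNT; rewrite -leqNgt -cA => leAI.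
have eAI : A :&: B = A by apply/eqP; rewrite eqEcard subsetIl leAI.
by rewrite eqEcard cA cB leqnn andbT -eAI subsetIr.
Qed.

Definition smallfam (k : nat) (Q : {pred {set T}}) : {set {set T}} :=
  [set S : {set T} | (#|S| < k) && (S \in Q)].

Lemma interfam_ksets_sub k (Q : {pred {set T}}) F :
  F \subset [set S in @ksets T k | S \in Q] ->
  (forall A B, A \in Q -> B \in Q -> A :&: B \in Q) ->
  interfam F \subset smallfam k Q.
Proof.
move=> sF QI; apply/subsetP=> _ /imset2P[A B AF /[!inE] /andP[BF nAB] ->].
move: AF BF => /(subsetP sF) /[!inE] /andP[/eqP cA QA].
move=> /(subsetP sF) /[!inE] /andP[/eqP cB QB].
by rewrite card_meet_lt // QI.
Qed.

Lemma smallfam_relabel k (Q R : {pred {set T}}) (s : {perm T}) :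
  (forall S, S \in Q -> [set s i | i in S] \in R) ->
  #|smallfam k Q| <= #|smallfam k R|.
Proof.
move=> QR; have inj_s := @perm_inj _ s.
rewrite -(card_imset _ (imset_inj inj_s)); apply: subset_leq_card.
apply/subsetP=> _ /imsetP[S /[!inE] /andP[cS QS] ->].
by rewrite card_imset // cS QR.
Qed.

Lemma smallfam_swap k a b :
  #|smallfam k [pred S : {set T} | (a \in S) && (b \notin S)]| <=
  #|smallfam k [pred S : {set T} | (b \in S) && (a \notin S)]|.
Proof.
apply: (@smallfam_relabel k _ _ (tperm a b)) => S /[!inE] /andP[aS bS].
have memS i : (tperm a b i \in [set tperm a b j | j in S]) = (i \in S).
  by rewrite mem_imset //; apply: perm_inj.
by move: (memS a) (memS b); rewrite tpermL tpermR => -> ->; rewrite aS.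
Qed.

Lemma card_smallfam_split k (Q R : {pred {set T}}) :
  #|smallfam k Q| = #|smallfam k [pred S : {set T} | (S \in Q) && (S \in R)]| +
                    #|smallfam k [pred S : {set T} | (S \in Q) && (S \notin R)]|.
Proof.
rewrite -(cardsID [set S | S \in R] (smallfam k Q)).
by congr (_ + _); apply: eq_card=> S; rewrite !inE; case: (S \in R); rewrite ?andbT ?andbF.
Qed.

(* Removing b from the sets containing a and b is injective but misses the
   sets of size k - 1 containing a but not b, which exist when k <= #|T|. *)
Lemma smallfam_remove_lt k a b : a != b -> 2 <= k <= #|T| ->
  #|smallfam k [pred S : {set T} | (a \in S) && (b \in S)]| <
  #|smallfam k [pred S : {set T} | (a \in S) && (b \notin S)]|.
Proof.
move=> nab /andP[k2 kT].
have inj : {in smallfam k [pred S : {set T} | (a \in S) && (b \in S)] &,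
            injective (fun S => S :\ b)}.
  move=> A B /[!inE] /and3P[_ _ bA] /and3P[_ _ bB] eAB.
  by rewrite -(setD1K bA) -(setD1K bB) eAB.
rewrite -(card_in_imset inj); apply: proper_card; apply/properP; split.
  apply/subsetP=> _ /imsetP[S /[!inE] /and3P[cS aS bS] ->].
  rewrite !inE eqxx aS (negbTE nab) andbT /=.
  by move: cS; rewrite (cardsD1 b S) bS; lia.
have [D [aD sDb cD]] := @extend_subset [set a] (~: [set b]) k.-1
  ltac:(by rewrite sub1set in_setC in_set1)
  ltac:(by rewrite cards1 cardsC1; lia).
exists D.
  rewrite !inE cD (subsetP aD) ?inE //=.
  apply/andP; split; first by lia.
  by apply: contraTN sDb => bD; apply/subsetPn; exists b; rewrite ?inE ?eqxx.
apply/imsetP=> -[S /[!inE] /and3P[cS _ bS] eD].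
by move: cS cD; rewrite eD (cardsD1 b S) bS; lia.
Qed.

Lemma card_smallfam_union k (Q R : {pred {set T}}) :
  #|smallfam k [pred S : {set T} | (S \in Q) || (S \in R)]| =
  #|smallfam k Q| + #|smallfam k [pred S : {set T} | (S \in R) && (S \notin Q)]|.
Proof.
rewrite (card_smallfam_split _ _ Q); congr (_ + _); apply: eq_card=> S;
by rewrite !inE; case: (S \in Q); case: (S \in R); rewrite ?andbT ?andbF.
Qed.

(* The core count.  With p = |P_k(a, b)|, q = |P_k(a, not b)| and
   g = |P_k(b, not a)| we have p < q <= g, so 3 (p + q) < 2 (p + q + g). *)
Lemma smallfam_two_points k a b : a != b -> 2 <= k <= #|T| ->
  3 * #|smallfam k [pred S : {set T} | a \in S]| <
  2 * #|smallfam k [pred S : {set T} | (a \in S) || (b \in S)]|.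
Proof.
move=> nab kT.
have split_a : #|smallfam k [pred S : {set T} | a \in S]| =
    #|smallfam k [pred S : {set T} | (a \in S) && (b \in S)]| +
    #|smallfam k [pred S : {set T} | (a \in S) && (b \notin S)]|.
  exact: card_smallfam_split.
have union : #|smallfam k [pred S : {set T} | (a \in S) || (b \in S)]| =
    #|smallfam k [pred S : {set T} | a \in S]| +
    #|smallfam k [pred S : {set T} | (b \in S) && (a \notin S)]|.
  exact: card_smallfam_union.
have p_lt_q := smallfam_remove_lt nab kT.
have q_le_g := smallfam_swap k a b.
lia.
Qed.

End FiniteSets.

Lemma card_first3 n : 3 <= n -> #|first3 n| = 3.
Proof.
move=> n3; have widen_inj : injective (widen_ord n3).
  by move=> u v /(congr1 val) /= /val_inj.
rewrite -[RHS]card_ord -(card_imset _ widen_inj).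
apply: eq_card=> i; rewrite inE; apply/idP/imsetP => [i3 | [j _ ->]] //=.
by exists (Ordinal i3) => //; apply: val_inj.
Qed.

Lemma union_in_famA n k (S P D : {set 'I_n}) :
  #|S| <= k -> P \subset first3 n :\: S -> P \subset D -> D \subset ~: S ->
  #|D| = k - #|S| -> 2 <= #|S :&: first3 n| + #|P| -> S :|: D \in famA n k.
Proof.
move=> cS sP sPD sD cD enough; rewrite !inE.
have dSD : [disjoint S & D] by rewrite disjoint_sym disjoints_subset.
rewrite cardsU_disjoint // cD subnKC // eqxx /=.
have [sPF dPS] := subsetDP sP.
have dSP : [disjoint S :&: first3 n & P].
  by rewrite disjoint_sym; apply: disjointWr (subsetIl _ _) dPS.
apply: leq_trans (subset_leq_card (_ : (S :&: first3 n) :|: P \subset _)).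
  by rewrite cardsU_disjoint.
by rewrite setIUl setUS // subsetI sPD sPF.
Qed.

(* When n > 2k, every S with |S| < k meeting {0,1,2} is the meet of two
   distinct members of A: S is enlarged by disjoint blocks D1, D2 outside S,
   where D_i contains 2 - |S :&: {0,1,2}| further points of {0,1,2}. *)
Lemma smallfam_first3_sub n k :
  2 * k < n ->
  smallfam k [pred S : {set 'I_n} | S :&: first3 n != set0]
    \subset interfam (famA n k).
Proof.
move=> nk; apply/subsetP=> S /[!inE] /andP[cS /set0Pn[a aSF]].
have F3 : #|first3 n| = 3 by apply: card_first3; lia.
set t := #|S :&: first3 n|.
have t1 : 0 < t by apply/card_gt0P; exists a.
have cFS : #|first3 n :\: S| = 3 - t by rewrite cardsD F3 setIC.
have [P1 [_ sP1 cP1]] := @extend_subset _ set0 (first3 n :\: S) (2 - t)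
  (sub0set _) ltac:(by rewrite cards0 cFS; lia).
have [P2 [_ sP2 cP2]] :=
  @extend_subset _ set0 ((first3 n :\: S) :\: P1) (2 - t)
  (sub0set _) ltac:(by rewrite cards0 cardsDS // cFS; lia).
have cC : #|~: S| = n - #|S| by rewrite cardsCs setCK card_ord.
have [D1 [D2 [sPD1 sPD2 sD1 sD2 [dD cD1 cD2]]]] :=
  @disjoint_extensions _ (~: S) P1 P2 (k - #|S|)
    (subset_trans sP1 (subsetDr _ _))
    (subset_trans sP2 (subset_trans (subsetDl _ _) (subsetDr _ _)))
    ltac:(by rewrite disjoint_sym; case/subsetDP: sP2)
    ltac:(lia) ltac:(lia) ltac:(lia).
have enough_first3 : 2 <= t + (2 - t) by rewrite -maxnE leq_maxr.
have SD1 : S :|: D1 \in famA n k.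
  by apply: (union_in_famA (ltnW cS) sP1); rewrite ?cP1.
have SD2 : S :|: D2 \in famA n k.
  by apply: (union_in_famA (ltnW cS) (subset_trans sP2 (subsetDl _ _))); rewrite ?cP2.
have eS : (S :|: D1) :&: (S :|: D2) = S by rewrite -setUIr disjoint_setI0 ?setU0.
rewrite -eS; apply: (meet_in_interfam SD1 SD2); rewrite eS.
by move: SD1; rewrite !inE => /andP[/eqP -> _].
Qed.

Theorem mainTheorem3 (k n : nat) (x : 'I_n) :
  (2 <= k)%N -> (2 * k < n)%N ->
  (3 * #|interfam (star k x)| < 2 * #|interfam (famA n k)|)%N.
Proof.
move=> k2 nk; have n1 : 1 < n by lia.
pose i0 : 'I_n := Ordinal (ltnW n1); pose i1 : 'I_n := Ordinal n1.
have star_le :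
    #|interfam (star k x)| <= #|smallfam k [pred S : {set 'I_n} | x \in S]|.
  apply/subset_leq_card/interfam_ksets_sub => [|A B]; last by rewrite !inE => -> ->.
  by apply/subsetP=> S; rewrite !inE.
have x_le_i0 : #|smallfam k [pred S : {set 'I_n} | x \in S]| <=
    #|smallfam k [pred S : {set 'I_n} | i0 \in S]|.
  apply: (@smallfam_relabel _ k _ _ (tperm x i0)) => S /[!inE] xS.
  by apply/imsetP; exists x; rewrite ?tpermL.
have count : 3 * #|smallfam k [pred S : {set 'I_n} | i0 \in S]| <
    2 * #|smallfam k [pred S : {set 'I_n} | (i0 \in S) || (i1 \in S)]|.
  by apply: smallfam_two_points; rewrite // card_ord k2; lia.
have famA_ge : #|smallfam k [pred S : {set 'I_n} | (i0 \in S) || (i1 \in S)]| <=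
    #|interfam (famA n k)|.
  apply/subset_leq_card/(subset_trans _ (smallfam_first3_sub nk)).
  apply/subsetP=> S /[!inE] /andP[-> /orP[iS | iS]]; apply/set0Pn.
    by exists i0; rewrite !inE iS.
  by exists i1; rewrite !inE iS.
lia.
Qed.
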